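(* Let $\gamma_{sd},\gamma_{sr},\gamma_{rd}>0$ be the effective power gains of the source–destination, source–relay and relay–destination links, and let $P>0$ be a total power (spectral density). Define the direct-transmission (DT) rate $R^{DT}(P)=\log(1+\gamma_{sd}P)$ and the regenerative decode-and-forward (DF) rate \[ R^{DF}(P)=\max_{\substack{P_s,P_r\ge 0\\ \frac12 P_s+\frac12 P_r=P}}\ \min\Big\{\tfrac12\log\big(1+\gamma_{sr}P_s\big),\ \tfrac12\log\big(1+\gamma_{sd}P_s+\gamma_{rd}P_r\big)\Big\}. \] If $\gamma_{sr}<\gamma_{sd}$ or $\gamma_{rd}<\gamma_{sd}$, then $R^{DT}(P)>R^{DF}(P)$, i.e. the DT link supports a higher rate than the DF link with the same total power (the DF link is not useful).
   Context: Half-duplex regenerative (repetition-coding) decode-and-forward relaying: in the first half of the time the source transmits with power $P_s$ and the relay must decode; in the second half the relay transmits with power $P_r$, and the destination combines (maximal-ratio combining) both received signals. Powers are spectral densities and the factors $\tfrac12$ account for each node transmitting half the time; $\log$ denotes the logarithm (any fixed base). *)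

From mathcomp Require Import all_boot all_order all_algebra.
From mathcomp Require Import all_classical all_reals all_analysis.
Set Implicit Arguments. Unset Strict Implicit. Unset Printing Implicit Defensive.
Import Order.TTheory GRing.Theory Num.Theory.
Local Open Scope classical_set_scope.
Local Open Scope ring_scope.

Section Rates.
Variable R : realType.

Definition logb (b x : R) : R := ln x / ln b.

Definition rate_DT (b gsd P : R) : R := logb b (1 + gsd * P).

Definition df_obj (b gsd gsr grd Ps Pr : R) : R :=
  Num.min (2^-1 * logb b (1 + gsr * Ps))
          (2^-1 * logb b (1 + gsd * Ps + grd * Pr)).

Definition df_values (b gsd gsr grd P : R) : set R :=
  [set x | exists Ps Pr : R, [/\ 0 <= Ps, 0 <= Pr,
      2^-1 * Ps + 2^-1 * Pr = P & x = df_obj b gsd gsr grd Ps Pr]].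

(* regenerative DF rate: the maximum (= supremum, attained on the compact
   feasible set) of the objective over feasible splits *)
Definition rate_DF (b gsd gsr grd P : R) : R := sup (df_values b gsd gsr grd P).

End Rates.

(** Under either hypothesis one of the two terms of the DF objective is
    dominated by what the direct link would carry with the whole budget
    [P_s <= 2P] sent in half the time: if [gsr < gsd] the source-relay term
    is below [log (1 + gsd P_s) / 2], and if [grd < gsd] the destination term
    is below [log (1 + gsd (P_s + P_r)) / 2]. Hence [R^DF <= log (1 + 2 gsd P) / 2],
    which is strictly below [log (1 + gsd P)] because [(1 + x)^2 > 1 + 2x]. *)
From mathcomp Require Import all_boot all_order all_algebra.
From mathcomp Require Import all_classical all_reals all_analysis.
From mathcomp Require Import ring lra.
Set Implicit Arguments. Unset Strict Implicit. Unset Printing Implicit Defensive.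
Import Order.TTheory GRing.Theory Num.Theory.
Local Open Scope ring_scope.

Section Logb.
Variables (R : realType) (b : R).
Hypothesis hb : 1 < b.

Lemma ler_logb (x y : R) : 0 < x -> x <= y -> logb b x <= logb b y.
Proof.
move=> hx hxy; rewrite /logb; apply: ler_wpM2r.
  by rewrite invr_ge0 ltW ?ln_gt0.
by rewrite ler_ln ?posrE ?(lt_le_trans hx).
Qed.

Lemma half_logb_1D2x_lt (x : R) :
  0 < x -> 2^-1 * logb b (1 + 2 * x) < logb b (1 + x).
Proof.
move=> hx; rewrite /logb mulrA ltr_pM2r ?invr_gt0 ?ln_gt0 //.
have h1x : 0 < 1 + x by lra.
have -> : ln (1 + x) = 2^-1 * ln ((1 + x) ^+ 2) by rewrite lnXn // mulr2n; field.
rewrite ltr_pM2l ?invr_gt0 // ltr_ln ?posrE ?exprn_gt0 //; first by nra.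
lra.
Qed.

End Logb.

Section DFBound.
Variables (R : realType) (b gsd gsr grd P : R).
Hypotheses (hb : 1 < b) (hsd : 0 < gsd) (hsr : 0 < gsr) (hrd : 0 < grd).

Lemma df_values_nonempty : 0 <= P -> (df_values b gsd gsr grd P !=set0)%classic.
Proof.
by move=> hP; exists (df_obj b gsd gsr grd (2 * P) 0), (2 * P), 0; split; lra.
Qed.

Lemma df_obj_le_half_logb (Ps Pr : R) : gsr < gsd \/ grd < gsd ->
  0 <= Ps -> 0 <= Pr -> 2^-1 * Ps + 2^-1 * Pr = P ->
  df_obj b gsd gsr grd Ps Pr <= 2^-1 * logb b (1 + 2 * gsd * P).
Proof.
move=> hcond hPs hPr hsum.
have hPsum : Ps + Pr = 2 * P by lra.
have hsdPs : 0 <= gsd * Ps by rewrite mulr_ge0 // ltW.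
have hsrPs : 0 <= gsr * Ps by rewrite mulr_ge0 // ltW.
have hrdPr : 0 <= grd * Pr by rewrite mulr_ge0 // ltW.
rewrite /df_obj ge_min; apply/orP.
case: hcond => h; [left | right]; rewrite ler_pM2l ?invr_gt0 //;
  apply: (ler_logb hb); try lra.
- have : gsr * Ps <= gsd * (Ps + Pr).
    by rewrite ler_pM ?(ltW hsr) ?(ltW h) ?lerDl.
  rewrite hPsum; lra.
- have : grd * Pr <= gsd * Pr by rewrite ler_wpM2r // ltW.
  have : gsd * (Ps + Pr) = 2 * gsd * P by rewrite hPsum mulrCA mulrA.
  lra.
Qed.

Lemma rate_DF_le_half_logb : gsr < gsd \/ grd < gsd -> 0 <= P ->
  rate_DF b gsd gsr grd P <= 2^-1 * logb b (1 + 2 * gsd * P).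
Proof.
move=> hcond hP; apply: ge_sup; first exact: df_values_nonempty.
by move=> _ [Ps [Pr [hPs hPr hsum ->]]]; apply: df_obj_le_half_logb.
Qed.

End DFBound.

Theorem proposition1 (R : realType) (b gsd gsr grd P : R)
  (hb : 1 < b) (hsd : 0 < gsd) (hsr : 0 < gsr) (hrd : 0 < grd) (hP : 0 < P)
  (hcond : gsr < gsd \/ grd < gsd) :
  rate_DF b gsd gsr grd P < rate_DT b gsd P.
Proof.
apply: le_lt_trans (rate_DF_le_half_logb hb hsd hsr hrd hcond (ltW hP)) _.
by rewrite -mulrA (half_logb_1D2x_lt hb) // mulr_gt0.
Qed.
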